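(* For proposition letters $p,o,q$, the formula $\mathcal{K}hm(p,o,q)\wedge\neg\mathcal{K}hm(p,\bot,q)\to\mathcal{K}hm(p,\bot,o)$ is valid, i.e., true at every state of every model.
   Context: Fix a countable set of proposition letters $\mathbf{P}$ and a countable non-empty set of action symbols $\Sigma$. Formulas: $\phi ::= p \mid \neg\phi \mid (\phi\wedge\phi) \mid \mathcal{K}hm(\phi,\phi,\phi)$; $\top,\bot,\to$ as usual. A model is $(S,\mathcal{R},\mathcal{V})$ with $S\neq\emptyset$, $\mathcal{R}:\Sigma\to 2^{S\times S}$, $\mathcal{V}:S\to 2^{\mathbf{P}}$. For $\sigma=a_1\cdots a_n\in\Sigma^*$, $s\xrightarrow{\sigma}t$ means there is a path $s\xrightarrow{a_1}\cdots\xrightarrow{a_n}t$ ($s\xrightarrow{\epsilon}s$ for the empty sequence); $\sigma_k=a_1\cdots a_k$, $\sigma_0=\epsilon$. $\sigma$ is strongly $\chi$-executable at $s'$ if for each $0\le k<n$, every $t$ with $s'\xrightarrow{\sigma_k}t$ has an $a_{k+1}$-successor, and every $t$ with $s'\xrightarrow{\sigma_k}t$ for $0<k<n$ satisfies $\chi$. $\mathcal{M},s\vDash\mathcal{K}hm(\psi,\chi,\phi)$ iff there is $\sigma\in\Sigma^*$ such that for every $s'$ with $\mathcal{M},s'\vDash\psi$, $\sigma$ is strongly $\chi$-executable at $s'$ and $\mathcal{M},t\vDash\phi$ for all $t$ with $s'\xrightarrow{\sigma}t$; atoms and Booleans are interpreted as usual ($\mathcal{M},s\vDash p$ iff $p\in\mathcal{V}(s)$).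 *)

From Stdlib Require Import List Arith.
Import ListNotations.
Set Implicit Arguments.

Inductive form (P : Type) : Type :=
| Var : P -> form P
| Neg : form P -> form P
| And : form P -> form P -> form P
| Khm : form P -> form P -> form P -> form P.

Arguments Var {P} _.
Arguments Neg {P} _.
Arguments And {P} _ _.
Arguments Khm {P} _ _ _.

Definition Bot {P : Type} (r : P) : form P := And (Var r) (Neg (Var r)).
Definition Top {P : Type} (r : P) : form P := Neg (Bot r).
Definition Imp {P : Type} (a b : form P) : form P := Neg (And a (Neg b)).

Section Semantics.
Variables (P Sig S : Type).
Variable R : Sig -> S -> S -> Prop.
Variable V : S -> P -> Prop.

Fixpoint reach (sigma : list Sig) (s t : S) : Prop :=
  match sigma with
  | [] => s = t
  | a :: l => exists u, R a s u /\ reach l u t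
  end.

Definition strongly_exec (chi : S -> Prop) (sigma : list Sig) (s' : S) : Prop :=
  (forall k a, nth_error sigma k = Some a ->
     forall t, reach (firstn k sigma) s' t -> exists u, R a t u) /\
  (forall k, 0 < k -> k < length sigma ->
     forall t, reach (firstn k sigma) s' t -> chi t).

Fixpoint sat (f : form P) (s : S) : Prop :=
  match f with
  | Var p => V s p
  | Neg g => ~ sat g s
  | And g h => sat g s /\ sat h s
  | Khm psi chi phi =>
      exists sigma : list Sig,
        forall s', sat psi s' ->
          strongly_exec (sat chi) sigma s' /\
          (forall t, reach sigma s' t -> sat phi t)
  end.
End Semantics.

Definition countable (T : Type) : Prop :=
  exists f : T -> nat, forall x y, f x = f y -> x = y.

(* A plan of length at most one has no intermediate states, so its constraint
   can be replaced by any other, e.g. bottom.  A longer plan witnessing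
   Khm(p, o, q) passes only through o-states after its first action, so that
   first action alone witnesses Khm(p, bottom, o). *)
From Stdlib Require Import List Arith Lia.

Section KnowingHow.
Context {P Sig S : Type} {R : Sig -> S -> S -> Prop} {V : S -> P -> Prop}.

Lemma strongly_exec_firstn {chi : S -> Prop} {sigma : list Sig} {s : S} (k : nat) :
  strongly_exec R chi sigma s -> strongly_exec R chi (firstn k sigma) s.
Proof.
  intros [Hsucc Hchi]; split.
  - intros i a Ha t Ht.
    rewrite nth_error_firstn in Ha.
    destruct (Nat.ltb_spec i k) as [Hik|_]; [|discriminate].
    rewrite firstn_firstn, Nat.min_l in Ht by lia.
    exact (Hsucc i a Ha t Ht).
  - intros i Hi Hlen t Ht.
    rewrite length_firstn in Hlen.
    rewrite firstn_firstn, Nat.min_l in Ht by lia.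
    apply (Hchi i); [lia | lia | exact Ht].
Qed.

Lemma strongly_exec_short {chi : S -> Prop} (chi' : S -> Prop)
    {sigma : list Sig} {s : S} :
  length sigma <= 1 -> strongly_exec R chi sigma s -> strongly_exec R chi' sigma s.
Proof.
  intros Hlen [Hsucc _]; split; [exact Hsucc | intros; lia].
Qed.

Lemma sat_Khm_short_or_prefix {psi chi phi : form P} (chi' : form P) {s : S} :
  sat R V (Khm psi chi phi) s ->
  sat R V (Khm psi chi' phi) s \/ sat R V (Khm psi chi' chi) s.
Proof.
  intros [sigma Hsigma].
  destruct (Nat.le_gt_cases (length sigma) 1) as [Hshort|Hlong].
  - left; exists sigma; intros s' Hs'.
    destruct (Hsigma s' Hs') as [Hexec Hphi].
    split; [exact (strongly_exec_short (sat R V chi') Hshort Hexec) | exact Hphi].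
  - right; exists (firstn 1 sigma); intros s' Hs'.
    destruct (Hsigma s' Hs') as [Hexec _].
    split.
    + exact (strongly_exec_short _ (firstn_le_length 1 sigma)
               (strongly_exec_firstn 1 Hexec)).
    + intros t Ht; exact (proj2 Hexec 1 Nat.lt_0_1 Hlong t Ht).
Qed.

End KnowingHow.

Theorem mainTheorem5
  (P Sig : Type) (HPc : countable P) (HSc : countable Sig) (HSne : inhabited Sig)
  (p o q : P)
  (S : Type) (HS : inhabited S) (R : Sig -> S -> S -> Prop) (V : S -> P -> Prop)
  (s : S) :
  sat R V
    (Imp (And (Khm (Var p) (Var o) (Var q))
              (Neg (Khm (Var p) (Bot p) (Var q))))
         (Khm (Var p) (Bot p) (Var o))) s.
Proof.
  intros [[Hkhm Hnot_q] Hnot_o].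
  destruct (sat_Khm_short_or_prefix (Bot p) Hkhm) as [Hq|Ho].
  - exact (Hnot_q Hq).
  - exact (Hnot_o Ho).
Qed.
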